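(* Let $\mathcal{X}$ be a finite set, $\underline{Q}$ a lower transition rate operator on $\mathcal{L}(\mathcal{X})$, $t>0$, and let $\Gamma\colon[0,t]\to\mathcal{L}(\mathcal{X})$ be continuously differentiable with $\frac{d}{ds}\Gamma(s)\ge\underline{Q}\Gamma(s)$ (pointwise) for all $s\in[0,t]$. Then $\min\Gamma(t)\ge\min\Gamma(0)$.
   Context: $\mathcal{L}(\mathcal{X})$ is the set of real-valued functions on $\mathcal{X}$ (identified with $\mathbb{R}^{\mathcal{X}}$) with pointwise operations and order, real constants identified with constant functions, $\mathbb{I}_y$ the indicator of $\{y\}$. A lower transition rate operator is a map $\underline{Q}\colon\mathcal{L}(\mathcal{X})\to\mathcal{L}(\mathcal{X})$ such that for all $f,g$, $\lambda\ge0$, $\mu\in\mathbb{R}$, $x,y\in\mathcal{X}$: $\underline{Q}(\mu)=0$; $\underline{Q}(f+g)\ge\underline{Q}f+\underline{Q}g$; $\underline{Q}(\lambda f)=\lambda\underline{Q}f$; $x\ne y\Rightarrow\underline{Q}(\mathbb{I}_y)(x)\ge0$. *)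

From HB Require Import structures.
From mathcomp Require Import all_boot all_order all_algebra.
From mathcomp Require Import all_classical all_reals all_analysis.
Set Implicit Arguments. Unset Strict Implicit. Unset Printing Implicit Defensive.
Import Order.TTheory GRing.Theory Num.Theory.
Import numFieldNormedType.Exports.
Local Open Scope classical_set_scope.
Local Open Scope ring_scope.

(* L(X) is identified with X -> R. *)

Definition lower_transition_rate_operator (R : realType) (X : finType)
    (Q : (X -> R) -> (X -> R)) : Prop :=
  [/\ (forall mu : R, Q (fun _ => mu) = (fun _ => 0)),
      (forall (f g : X -> R) (x : X), Q f x + Q g x <= Q (fun z => f z + g z) x),
      (forall (lam : R) (f : X -> R), 0 <= lam ->
          Q (fun z => lam * f z) = (fun z => lam * Q f z)) &
      (forall x y : X, x != y -> 0 <= Q (fun z => if z == y then 1 else 0) x)].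

(* [l] is the derivative of [f] at [s] relative to the set [A]
   (one-sided at boundary points of an interval A). *)
Definition has_deriv_within (R : realType) (A : set R) (f : R -> R) (s l : R) : Prop :=
  (fun h : R => h^-1 * (f (s + h) - f s))
    @ within [set h : R | h != 0 /\ A (s + h)] (nbhs (0 : R)) --> l.

(* minimum of a function on a nonempty finite set (x0 witnesses nonemptiness) *)
Definition fmin (R : realType) (X : finType) (x0 : X) (f : X -> R) : R :=
  \big[Num.min/f x0]_(x : X) f x.

From HB Require Import structures.
From mathcomp Require Import all_boot all_order all_algebra.
From mathcomp Require Import all_classical all_reals all_analysis.
From mathcomp Require Import ring lra.
Set Implicit Arguments. Unset Strict Implicit. Unset Printing Implicit Defensive.
Import Order.TTheory GRing.Theory Num.Theory.
Import numFieldNormedType.Exports.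
Local Open Scope classical_set_scope.
Local Open Scope ring_scope.

(* For eps > 0 the perturbed minimum  m(s) := min Gamma(s) + eps s  never drops
   below m(0); this is shown by real induction on [0, t].  The bound passes to
   limits from the left by continuity.  To the right of a time c, a coordinate z
   with Gamma(c) z + eps c > m(0) stays above m(0) for a while; one with equality
   attains the minimum of Gamma(c), so Q Gamma(c) z >= 0 by the sign condition on
   the off-diagonal entries of Q, and Gamma(.) z + eps . has right derivative at
   least eps > 0 at c.  Letting eps -> 0 gives the claim. *)

Section LowerTransitionRateOperator.
Variables (R : realType) (X : finType) (Q : (X -> R) -> (X -> R)).
Hypothesis HQ : lower_transition_rate_operator Q.

Lemma ltro_sum (I : Type) (r : seq I) (F : I -> X -> R) (x : X) :
  \sum_(i <- r) Q (F i) x <= Q (fun z => \sum_(i <- r) F i z) x.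
Proof.
case: HQ => Q_cst Q_add _ _.
elim: r => [|a r IH].
  rewrite big_nil.
  have -> : (fun z : X => \sum_(i <- [::]) F i z) = (fun _ => 0).
    by apply: funext => z; rewrite big_nil.
  by rewrite Q_cst.
rewrite big_cons.
have -> : (fun z : X => \sum_(i <- a :: r) F i z) =
          (fun z => F a z + (fun z => \sum_(i <- r) F i z) z).
  by apply: funext => z; rewrite big_cons.
by apply: le_trans (Q_add _ _ _); rewrite lerD2l.
Qed.

Lemma ltro_ge0_at_min (f : X -> R) (x : X) :
  (forall z, f x <= f z) -> 0 <= Q f x.
Proof.
move=> f_min; case: (HQ) => Q_cst Q_add Q_hom Q_offdiag.
pose g z := f z - f x.
have Qg_le : Q g x <= Q f x.
  have := Q_add g (fun _ => f x) x.
  rewrite Q_cst addr0.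
  by have -> : (fun z => g z + f x) = f by apply: funext => z; rewrite /g subrK.
have g_split : g = (fun z => \sum_(y : X) g y * (if z == y then 1 else 0)).
  apply: funext => z.
  rewrite (bigD1 z) //= eqxx mulr1 big1 ?addr0 // => y /negbTE yz.
  by rewrite eq_sym yz mulr0.
apply: le_trans Qg_le; rewrite g_split.
apply: le_trans (ltro_sum _ (fun y z => g y * (if z == y then 1 else 0)) x).
apply: sumr_ge0 => y _.
have gy_ge0 : 0 <= g y by rewrite subr_ge0.
rewrite Q_hom //; case: (eqVneq x y) => [<-|xy].
  by rewrite /g subrr mul0r.
by rewrite mulr_ge0 // Q_offdiag.
Qed.

End LowerTransitionRateOperator.

Section DerivativeWithin.
Variables (R : realType) (A : set R) (f : R -> R) (c l : R).
Hypothesis f_deriv : has_deriv_within A f c l.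

Lemma has_deriv_within_approx e : 0 < e ->
  exists2 d, 0 < d & forall s, A s -> `|s - c| < d ->
    `|f s - f c - l * (s - c)| <= e * `|s - c|.
Proof.
move=> e_gt0.
move/cvgrPdist_lt: f_deriv => /(_ e e_gt0) /nbhs_ballP [d d_gt0 Hd].
exists d => // s As sc_d.
have [->|sc] := eqVneq s c; first by rewrite !subrr !(mulr0, normr0, subr0).
have sc_neq0 : s - c != 0 by rewrite subr_eq0.
have := Hd (s - c); rewrite /ball /= sub0r normrN => /(_ sc_d).
rewrite addrCA subrr addr0 => /(_ (conj sc_neq0 As)) close.
have -> : f s - f c - l * (s - c) = (s - c) * ((s - c)^-1 * (f s - f c) - l).
  by field.
by rewrite normrM mulrC ler_wpM2r // distrC ltW.
Qed.

Lemma has_deriv_within_ge_right e : 0 < e ->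
  exists2 d, 0 < d & forall u, A u -> c <= u < c + d ->
    f c + (l - e) * (u - c) <= f u.
Proof.
move=> e_gt0; have [d d_gt0 Hd] := has_deriv_within_approx e_gt0.
exists d => // u Au /andP[cu ud].
have uc_norm : `|u - c| = u - c by rewrite ger0_norm // subr_ge0.
have uc_d : `|u - c| < d by rewrite uc_norm; lra.
move: (Hd u Au uc_d); rewrite uc_norm ler_norml => /andP[lo _].
by rewrite mulrBl; lra.
Qed.

Lemma has_deriv_within_ge_left m r0 : 0 < r0 ->
  (forall r, 0 < r < r0 -> A (c - r) /\ m <= f (c - r)) -> m <= f c.
Proof.
move=> r0_gt0 below; apply/ler_addgt0Pr => e e_gt0.
have [d d_gt0 Hd] := has_deriv_within_approx ltr01.
pose K := `|l| + 1.
have K_gt0 : 0 < K by rewrite ltr_pwDr.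
pose mu := Num.min (Num.min r0 d) (e / K).
have mu_gt0 : 0 < mu by rewrite !lt_min r0_gt0 d_gt0 divr_gt0.
pose r := mu / 2.
have r_gt0 : 0 < r by rewrite divr_gt0.
have r_lt_mu : r < mu by rewrite /r; lra.
have [r_lt_r0 r_lt_d r_lt_eK] : [/\ r < r0, r < d & r < e / K].
  by split; apply: lt_le_trans r_lt_mu _; rewrite !ge_min lexx ?orbT.
have [Acr m_le] : A (c - r) /\ m <= f (c - r) by apply: below; rewrite r_gt0.
have := Hd (c - r) Acr.
rewrite (_ : c - r - c = - r); last by ring.
rewrite normrN gtr0_norm // => /(_ r_lt_d); rewrite ler_norml => /andP[_ hi].
have slope : l * - r <= `|l| * r.
  by rewrite mulrN -mulNr ler_wpM2r ?(ltW r_gt0) // -normrN ler_norm.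
have rK : r * K < e by rewrite -ltr_pdivlMr.
have rK_eq : r * K = `|l| * r + r by rewrite /K mulrDr mulr1 mulrC.
lra.
Qed.

End DerivativeWithin.

Section RealInduction.
Variables (R : realType) (a b : R) (P : R -> Prop).

Lemma real_induction :
  (forall c, a <= c <= b -> (forall u, a <= u < c -> P u) -> P c) ->
  (forall c, a <= c < b -> P c ->
     exists2 d, 0 < d & forall u, c < u <= b -> u < c + d -> P u) ->
  forall s, a <= s <= b -> P s.
Proof.
move=> closed_left open_right s /andP[as_ sb].
have [//|notPs] := pselect (P s); exfalso.
pose S := [set u | a <= u <= b /\ ~ P u].
have Ss : S s by split; first by rewrite as_.
have S_lb : lbound S a by move=> u [/andP[]].
have S_hlb : has_lbound S by exists a.
pose c := inf S.
have ac : a <= c := lb_le_inf (ex_intro _ s Ss) S_lb.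
have cs : c <= s := ge_inf S_hlb Ss.
have cb : c <= b := le_trans cs sb.
have below : forall u, a <= u < c -> P u.
  move=> u /andP[au uc]; have [//|notPu] := pselect (P u).
  have Su : S u by split; first by rewrite au (le_trans (ltW uc) cb).
  by have := ge_inf S_hlb Su; rewrite leNgt uc.
have Pc : P c by apply: closed_left; rewrite ?ac.
have cb_lt : c < b.
  rewrite lt_neqAle cb andbT; apply/eqP => cb_eq.
  by apply: notPs; have -> : s = c by apply/eqP; rewrite eq_le cs cb_eq sb.
have [d d_gt0 right] : exists2 d, 0 < d & forall u, c < u <= b -> u < c + d -> P u.
  by apply: open_right; rewrite ?ac.
have [u Su ud] := inf_adherent d_gt0 (conj (ex_intro _ s Ss) S_hlb).
have cu : c <= u := ge_inf S_hlb Su.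
case: Su => /andP[_ ub] notPu.
have cu_lt : c < u by rewrite lt_neqAle cu andbT; apply/eqP => cu_eq; rewrite -cu_eq in notPu.
by apply: notPu; apply: right; rewrite ?cu_lt.
Qed.

End RealInduction.

Lemma uniform_radius (R : realType) (I : finType) (D : set R) (c : R)
    (P : I -> R -> Prop) :
  (forall i, exists2 d, 0 < d & forall u, D u -> u < c + d -> P i u) ->
  exists2 d, 0 < d & forall u, D u -> u < c + d -> forall i, P i u.
Proof.
move=> radius.
have /choice[d d_spec] : forall i, exists d, 0 < d /\
    forall u, D u -> u < c + d -> P i u.
  by move=> i; have [d d_gt0 Hd] := radius i; exists d.
exists (\big[Num.min/1]_i d i).
  apply: (big_ind (fun v => 0 < v)) => // [v w v_gt0 w_gt0|i _].
    by rewrite lt_min v_gt0 w_gt0.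
  by case: (d_spec i).
move=> u Du u_lt i; case: (d_spec i) => _; apply => //.
by apply: lt_le_trans u_lt _; rewrite lerD2l bigmin_le.
Qed.

Lemma affine_ge_near0 (R : realType) (m a l : R) :
  m <= a -> (a = m -> 0 <= l) ->
  exists2 d, 0 < d & forall v, 0 <= v < d -> m <= a + l * v.
Proof.
move=> ma tight.
have [l_ge0|l_lt0] := lerP 0 l.
  by exists 1 => // v /andP[v_ge0 _]; have := mulr_ge0 l_ge0 v_ge0; lra.
have ma_lt : m < a.
  rewrite lt_neqAle ma andbT; apply/eqP => am.
  by have := tight (esym am); rewrite leNgt l_lt0.
have nl_gt0 : 0 < - l by rewrite oppr_gt0.
exists ((a - m) / - l) => [|v /andP[v_ge0]]; first by rewrite divr_gt0 ?subr_gt0.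
rewrite ltr_pdivlMr // mulrN => v_lt.
by rewrite mulrC; lra.
Qed.

Section Barrier.
Variables (R : realType) (X : finType) (x0 : X) (Q : (X -> R) -> (X -> R)).
Variables (t : R) (Gamma Gamma' : R -> X -> R).
Hypothesis HQ : lower_transition_rate_operator Q.
Hypothesis Gamma_deriv : forall x s, s \in `[0, t] ->
  has_deriv_within [set` `[0, t]] (fun u => Gamma u x) s (Gamma' s x).
Hypothesis Gamma'_ge : forall s, s \in `[0, t] -> forall x, Q (Gamma s) x <= Gamma' s x.
Variables (eps : R).
Hypothesis eps_gt0 : 0 < eps.

Let above_barrier s := forall z, fmin x0 (Gamma 0) <= Gamma s z + eps * s.

Lemma barrier_left c : 0 <= c <= t ->
  (forall u, 0 <= u < c -> above_barrier u) -> above_barrier c.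
Proof.
move=> /andP[c_ge0 ct] below z.
have [->|c_neq0] := eqVneq c 0; first by rewrite mulr0 addr0 /fmin bigmin_le.
have c_gt0 : 0 < c by rewrite lt_neqAle eq_sym c_neq0.
have cin : c \in `[0, t] by rewrite in_itv /= c_ge0.
rewrite -lerBlDr; apply: (has_deriv_within_ge_left (Gamma_deriv (x := z) cin) c_gt0).
move=> r /andP[r_gt0 rc]; split; first by rewrite /= in_itv /=; lra.
have := below (c - r) ltac:(lra) z.
have := mulr_gt0 eps_gt0 r_gt0; rewrite mulrBr; lra.
Qed.

Lemma barrier_right c : 0 <= c < t -> above_barrier c ->
  exists2 d, 0 < d & forall u, c < u <= t -> u < c + d -> above_barrier u.
Proof.
move=> /andP[c_ge0 ct] above_c.
apply: uniform_radius => z.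
have cin : c \in `[0, t] by rewrite in_itv /= c_ge0 ltW.
have [d1 d1_gt0 slope] := has_deriv_within_ge_right (Gamma_deriv (x := z) cin) eps_gt0.
have tight_slope : Gamma c z + eps * c = fmin x0 (Gamma 0) -> 0 <= Gamma' c z.
  move=> tight; apply: le_trans (Gamma'_ge cin z); apply: (ltro_ge0_at_min HQ) => w.
  by have := above_c w; rewrite -tight; lra.
have [d2 d2_gt0 affine] := affine_ge_near0 (above_c z) tight_slope.
exists (Num.min d1 d2) => [|u /andP[cu ut]]; first by rewrite lt_min d1_gt0.
rewrite -ltrBlDl lt_min => /andP[ud1 ud2].
have uin : [set` `[0, t]] u by rewrite /= in_itv /= ut andbT; lra.
have := slope u uin ltac:(rewrite ltW //=; lra).
have := affine (u - c) ltac:(rewrite subr_ge0 ltW //=).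
rewrite mulrBl (_ : eps * u = eps * c + eps * (u - c)); last by ring.
lra.
Qed.

Lemma barrier_everywhere s : 0 <= s <= t -> above_barrier s.
Proof. exact: real_induction barrier_left barrier_right s. Qed.

End Barrier.

Theorem lemma3 (R : realType) (X : finType) (x0 : X)
    (Q : (X -> R) -> (X -> R)) (t : R)
    (Gamma Gamma' : R -> X -> R) :
  lower_transition_rate_operator Q ->
  0 < t ->
  (forall x : X, forall s : R, s \in `[0, t] ->
      has_deriv_within [set` `[0, t]] (fun u => Gamma u x) s (Gamma' s x)) ->
  (forall x : X, {within [set` `[0, t]], continuous (fun s => Gamma' s x)}) ->
  (forall s : R, s \in `[0, t] -> forall x : X, Q (Gamma s) x <= Gamma' s x) ->
  fmin x0 (Gamma 0) <= fmin x0 (Gamma t).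
Proof.
move=> HQ t_gt0 Gamma_deriv _ Gamma'_ge.
apply/ler_addgt0Pr => e e_gt0.
have eps_gt0 : 0 < e / t by rewrite divr_gt0.
have barrier_t := barrier_everywhere x0 HQ Gamma_deriv Gamma'_ge eps_gt0.
have bound y : fmin x0 (Gamma 0) - e <= Gamma t y.
  have := barrier_t t ltac:(rewrite ltW //= lexx) y.
  by rewrite divfK ?gt_eqF // lerBlDr.
rewrite -lerBlDr; apply: le_bigmin => [|y _]; exact: bound.
Qed.
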